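(* Let $\lambda,p_l,p_{l+1},q_m,q_{m+1}\in\mathbb{C}$ be generic and consider the six equations on the cube vertex values $(u_0,u_1,u_2,u_{12},v_0,v_1,v_2,v_{12})$: \[ \mathcal A:\ u_{12}-u_0-\frac{q_{m+1}-p_l}{u_2}+\frac{q_m-p_{l+1}}{u_1}=0,\qquad \mathcal S:\ u_0-v_{12}-\frac{q_m-p_{l+1}}{u_1}+\frac{\lambda-p_l}{v_2}=0, \] \[ \mathcal B:\ (u_0-v_0)\Big(\frac{q_m-p_l}{u_0}+v_2\Big)-q_m+\lambda=0,\qquad \mathcal B':\ (u_1-v_1)\Big(\frac{q_m-p_{l+1}}{u_1}+v_{12}\Big)-q_m+\lambda=0, \] \[ \mathcal C:\ \frac{q_m-p_l}{u_0}-\frac{\lambda-p_l}{v_0}-u_1+v_1=0,\qquad \mathcal C':\ \frac{q_{m+1}-p_l}{u_2}-\frac{\lambda-p_l}{v_2}-u_{12}+v_{12}=0. \] For generic $u_0,u_1,u_2,v_0$, solve $\mathcal A=0$ for $u_{12}$, $\mathcal B=0$ for $v_2$, $\mathcal C=0$ for $v_1$. Then the three expressions for $v_{12}$ obtained from $\mathcal S=0$, $\mathcal B'=0$, $\mathcal C'=0$ coincide as rational functions of $u_0,u_1,u_2,v_0$, and the tetrahedron equations \[ \mathcal K_1:\ \Big(v_{12}+\frac{q_m-p_{l+1}}{u_1}\Big)\Big(\frac{q_m-p_l}{u_0}-\frac{\lambda-p_l}{v_0}\Big)-q_m+\lambda=0,\qquad \mathcal K_2:\ \Big(\frac{\lambda-p_l}{v_2}+u_0\Big)(u_1-v_1)-q_m+\lambda=0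 \] hold identically.
   Context: The non-autonomous dKdV equation is $u_{l+1,m+1}-u_{l,m}=\frac{q_{m+1}-p_l}{u_{l,m+1}}-\frac{q_m-p_{l+1}}{u_{l+1,m}}$ with parameter sequences $p_l,q_m\in\mathbb{C}$. In the cube, $u_0=u_{l,m}$, $u_1=u_{l+1,m}$, $u_2=u_{l,m+1}$, $u_{12}=u_{l+1,m+1}$, and $v_0,v_1,v_2,v_{12}$ are correspondingly placed values of an auxiliary function $v$. Generic means all denominators are nonzero. *)

From mathcomp Require Import all_boot all_algebra reals complex.
Set Implicit Arguments. Unset Strict Implicit. Unset Printing Implicit Defensive.
Local Open Scope ring_scope.

Section Eqs.
Variable R : realType.
Notation C := (R[i]).

Definition eqA (lam pl pl1 qm qm1 : C) (u0 u1 u2 u12 : C) : C :=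
  u12 - u0 - (qm1 - pl) / u2 + (qm - pl1) / u1.
Definition eqS (lam pl pl1 qm qm1 : C) (u0 u1 v2 v12 : C) : C :=
  u0 - v12 - (qm - pl1) / u1 + (lam - pl) / v2.
Definition eqB (lam pl pl1 qm qm1 : C) (u0 v0 v2 : C) : C :=
  (u0 - v0) * ((qm - pl) / u0 + v2) - qm + lam.
Definition eqB' (lam pl pl1 qm qm1 : C) (u1 v1 v12 : C) : C :=
  (u1 - v1) * ((qm - pl1) / u1 + v12) - qm + lam.
Definition eqC (lam pl pl1 qm qm1 : C) (u0 u1 v0 v1 : C) : C :=
  (qm - pl) / u0 - (lam - pl) / v0 - u1 + v1.
Definition eqC' (lam pl pl1 qm qm1 : C) (u2 u12 v2 v12 : C) : C :=
  (qm1 - pl) / u2 - (lam - pl) / v2 - u12 + v12.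
Definition eqK1 (lam pl pl1 qm qm1 : C) (u0 u1 v0 v12 : C) : C :=
  (v12 + (qm - pl1) / u1) * ((qm - pl) / u0 - (lam - pl) / v0) - qm + lam.
Definition eqK2 (lam pl pl1 qm qm1 : C) (u0 u1 v1 v2 : C) : C :=
  ((lam - pl) / v2 + u0) * (u1 - v1) - qm + lam.
End Eqs.

From mathcomp Require Import all_boot all_algebra reals complex.
From mathcomp Require Import ring.
Set Implicit Arguments. Unset Strict Implicit. Unset Printing Implicit Defensive.
Local Open Scope ring_scope.
Import GRing.Theory.

(* The only non-linear content sits on the face carrying B and C:
   if v2 solves B, then the K2-combination built from v0, v2 and the C-value
   u1 - v1 = (q_m - p_l)/u0 - (lam - p_l)/v0 equals q_m - lam
   ([B_face_tetrahedron], proved over an arbitrary field).  The rest is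
   linear bookkeeping:
   - S, A and C' are linear in v12 and their sum is wC - wS, so wS = wC;
   - after substituting S and C, the expression K1 literally becomes K2;
   - B' and K2 (rewritten through S) say that u1 - v1 times
     (q_m - p_{l+1})/u1 + wB, resp. + wS, both equal q_m - lam; cancelling
     the nonzero factor u1 - v1 gives wB = wS. *)

(* Multiplying by v0 reduces it to the linear identity
   v0 (a/u0 - b/v0) = (u0 - v0) v2, itself a rearrangement of B. *)
Lemma B_face_tetrahedron (F : fieldType) (a b u0 v0 v2 : F) :
  u0 != 0 -> v0 != 0 -> v2 != 0 ->
  (u0 - v0) * (a / u0 + v2) = a - b ->
  (b / v2 + u0) * (a / u0 - b / v0) = a - b.
Proof.
move=> nz_u0 nz_v0 nz_v2 hB.
have v2_rel : v0 * (a / u0 - b / v0) = (u0 - v0) * v2.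
  have -> : (u0 - v0) * v2 = (u0 - v0) * (a / u0 + v2) - (u0 - v0) * (a / u0)
    by ring.
  by rewrite hB; field; rewrite nz_u0 nz_v0.
apply: (mulfI nz_v0); rewrite mulrCA v2_rel mulrDl.
have -> : b / v2 * ((u0 - v0) * v2) = b * (u0 - v0) by field.
by rewrite -v2_rel; field; rewrite nz_u0 nz_v0.
Qed.

Section CubeConsistency.
Variable R : realType.
Variables (lam pl pl1 qm qm1 : R[i]).

Local Notation A := (eqA lam pl pl1 qm qm1).
Local Notation S := (eqS lam pl pl1 qm qm1).
Local Notation B := (eqB lam pl pl1 qm qm1).
Local Notation B' := (eqB' lam pl pl1 qm qm1).
Local Notation C := (eqC lam pl pl1 qm qm1).
Local Notation C' := (eqC' lam pl pl1 qm qm1).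
Local Notation K1 := (eqK1 lam pl pl1 qm qm1).
Local Notation K2 := (eqK2 lam pl pl1 qm qm1).

(* The values of v12 given by S and by C' agree once u12 solves A:
   S + C' + A = wC - wS identically. *)
Lemma S_C'_agree (u0 u1 u2 u12 v2 wS wC : R[i]) :
  A u0 u1 u2 u12 = 0 -> S u0 u1 v2 wS = 0 -> C' u2 u12 v2 wC = 0 -> wS = wC.
Proof.
move=> hA hS hC'.
have sum_eq : wC - wS = S u0 u1 v2 wS + C' u2 u12 v2 wC + A u0 u1 u2 u12
  by rewrite /eqS /eqC' /eqA; ring.
by apply/esym/subr0_eq; rewrite sum_eq hS hC' hA !addr0.
Qed.

Lemma K1_eq_K2 (u0 u1 v0 v1 v2 wS : R[i]) :
  S u0 u1 v2 wS = 0 -> C u0 u1 v0 v1 = 0 -> K1 u0 u1 v0 wS = K2 u0 u1 v1 v2.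
Proof.
move=> hS hC.
have first_factor : wS + (qm - pl1) / u1 = (lam - pl) / v2 + u0 - S u0 u1 v2 wS
  by rewrite /eqS; ring.
have second_factor : (qm - pl) / u0 - (lam - pl) / v0 = u1 - v1 + C u0 u1 v0 v1
  by rewrite /eqC; ring.
by rewrite /eqK1 /eqK2 first_factor second_factor hS hC subr0 addr0.
Qed.

Lemma K2_holds (u0 u1 v0 v1 v2 : R[i]) :
  u0 != 0 -> v0 != 0 -> v2 != 0 ->
  B u0 v0 v2 = 0 -> C u0 u1 v0 v1 = 0 -> K2 u0 u1 v1 v2 = 0.
Proof.
move=> nz_u0 nz_v0 nz_v2 hB hC.
have hB_face : (u0 - v0) * ((qm - pl) / u0 + v2) = (qm - pl) - (lam - pl).
  by apply/subr0_eq; rewrite -hB /eqB; ring.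
have hC_face : u1 - v1 = (qm - pl) / u0 - (lam - pl) / v0.
  by apply/esym/subr0_eq; rewrite -hC /eqC; ring.
rewrite /eqK2 hC_face (B_face_tetrahedron nz_u0 nz_v0 nz_v2 hB_face).
by ring.
Qed.

(* The values of v12 given by S and by B' agree: both make u1 - v1 times
   (q_m - p_{l+1})/u1 + v12 equal to q_m - lam (for S this is K2). *)
Lemma S_B'_agree (u0 u1 v1 v2 wS wB : R[i]) :
  u1 - v1 != 0 ->
  S u0 u1 v2 wS = 0 -> K2 u0 u1 v1 v2 = 0 -> B' u1 v1 wB = 0 -> wS = wB.
Proof.
move=> nz_u1v1 hS hK2 hB'.
have via_S : (u1 - v1) * ((qm - pl1) / u1 + wS) = qm - lam.
  have -> : (qm - pl1) / u1 + wS = (lam - pl) / v2 + u0 - S u0 u1 v2 wS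
    by rewrite /eqS; ring.
  by apply/subr0_eq; rewrite hS subr0 -hK2 /eqK2; ring.
have via_B' : (u1 - v1) * ((qm - pl1) / u1 + wB) = qm - lam.
  by apply/subr0_eq; rewrite -hB' /eqB'; ring.
by apply/(addrI ((qm - pl1) / u1))/(mulfI nz_u1v1); rewrite via_S via_B'.
Qed.

End CubeConsistency.

Theorem mainTheorem6 (R : realType) (lam pl pl1 qm qm1 : R[i])
    (u0 u1 u2 v0 u12 v2 v1 wS wB wC : R[i]) :
  (* genericity: all denominators are nonzero *)
  u0 != 0 -> u1 != 0 -> u2 != 0 -> v0 != 0 -> u0 - v0 != 0 ->
  v2 != 0 -> u1 - v1 != 0 ->
  (* u12, v2, v1 solve A = 0, B = 0, C = 0 *)
  eqA lam pl pl1 qm qm1 u0 u1 u2 u12 = 0 ->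
  eqB lam pl pl1 qm qm1 u0 v0 v2 = 0 ->
  eqC lam pl pl1 qm qm1 u0 u1 v0 v1 = 0 ->
  (* wS, wB, wC are the values of v12 obtained from S = 0, B' = 0, C' = 0 *)
  eqS lam pl pl1 qm qm1 u0 u1 v2 wS = 0 ->
  eqB' lam pl pl1 qm qm1 u1 v1 wB = 0 ->
  eqC' lam pl pl1 qm qm1 u2 u12 v2 wC = 0 ->
  [/\ wS = wB, wS = wC,
      eqK1 lam pl pl1 qm qm1 u0 u1 v0 wS = 0 &
      eqK2 lam pl pl1 qm qm1 u0 u1 v1 v2 = 0].
Proof.
move=> nz_u0 _ _ nz_v0 _ nz_v2 nz_u1v1 hA hB hC hS hB' hC'.
have hK2 := K2_holds nz_u0 nz_v0 nz_v2 hB hC.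
split.
- exact: S_B'_agree nz_u1v1 hS hK2 hB'.
- exact: S_C'_agree hA hS hC'.
- by rewrite (K1_eq_K2 hS hC).
- exact: hK2.
Qed.
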